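(* Let $B$ be any group, $\sigma=(1,2)$, and let $w=(r_1,\ r_1^{-1}[f,g])\in B\wr C_2$ with $r_1,f,g\in B$. Put $a_{2,1}=(f^{-1})^{r_1^{-1}}$, $a_{2,2}=r_1a_{2,1}$, $a_{1,2}=g^{a_{2,2}^{-1}}$. Then $$w=\big[(e,a_{1,2})\sigma,\ (a_{2,1},a_{2,2})\big].$$
   Context: $B\wr C_2=B^2\rtimes C_2$, elements written $(g_1,g_2)\pi$ with multiplication $(g_1,g_2)\pi\cdot(h_1,h_2)\tau=(g_1h_{\pi(1)},g_2h_{\pi(2)})\pi\tau$. Conventions: $[a,b]=aba^{-1}b^{-1}$, $a^b=bab^{-1}$. *)

Set Implicit Arguments.

Section Grp.
Variables (B : Type) (mul : B -> B -> B) (inv : B -> B) (e : B).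

Record is_group : Prop := {
  mulA : forall x y z, mul x (mul y z) = mul (mul x y) z;
  mul1g : forall x, mul e x = x;
  mulg1 : forall x, mul x e = x;
  mulVg : forall x, mul (inv x) x = e;
  mulgV : forall x, mul x (inv x) = e
}.

(* Conventions: [a,b] = a b a^-1 b^-1 and a^b = b a b^-1. *)
Definition gcomm (a b : B) : B := mul (mul (mul a b) (inv a)) (inv b).
Definition gconj (a b : B) : B := mul (mul b a) (inv b).

(* Elements (g1, g2) pi of B wr C_2 = B^2 x| C_2; the permutation pi of {1,2}
   is encoded as a bool: false = identity, true = sigma = (1,2). *)
Record wr := Wr { wr1 : B; wr2 : B; wrp : bool }.

Definition wr_at1 (pi : bool) (h1 h2 : B) : B := if pi then h2 else h1.
Definition wr_at2 (pi : bool) (h1 h2 : B) : B := if pi then h1 else h2.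

(* (g1,g2)pi * (h1,h2)tau = (g1 h_{pi(1)}, g2 h_{pi(2)}) pi tau *)
Definition wr_mul (x y : wr) : wr :=
  Wr (mul (wr1 x) (wr_at1 (wrp x) (wr1 y) (wr2 y)))
     (mul (wr2 x) (wr_at2 (wrp x) (wr1 y) (wr2 y)))
     (xorb (wrp x) (wrp y)).

Definition wr_inv (x : wr) : wr :=
  Wr (inv (wr_at1 (wrp x) (wr1 x) (wr2 x)))
     (inv (wr_at2 (wrp x) (wr1 x) (wr2 x)))
     (wrp x).

Definition wr_comm (x y : wr) : wr :=
  wr_mul (wr_mul (wr_mul x y) (wr_inv x)) (wr_inv y).

End Grp.

(* The commutator of [(u, a) sigma] with a diagonal element [(b, c)] is the
   diagonal element [(u c u^-1 b^-1, a b a^-1 c^-1)], since conjugating by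
   [sigma] swaps the two coordinates. With [u = e] the first coordinate is
   [a22 a21^-1 = r1], and the choice of [a12] makes the second one equal to
   [r1^-1 [f, g]]. *)
Set Implicit Arguments.

Section GroupWords.
Variables (B : Type) (mul : B -> B -> B) (inv : B -> B) (e : B).
Hypothesis HB : is_group mul inv e.

Local Infix "*" := mul.
Local Notation "x ^-1" := (inv x) (at level 3, left associativity, format "x ^-1").
Local Notation mulgA := (mulA HB).
Local Notation mul1g := (mul1g HB).
Local Notation mulg1 := (mulg1 HB).
Local Notation mulVg := (mulVg HB).
Local Notation mulgV := (mulgV HB).

Lemma mulKg x y : x * (x^-1 * y) = y.
Proof. rewrite mulgA, mulgV, mul1g. reflexivity. Qed.

Lemma mulVKg x y : x^-1 * (x * y) = y.
Proof. rewrite mulgA, mulVg, mul1g. reflexivity. Qed.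

Lemma inv_eq_of_mul_eq1 x y : x * y = e -> x^-1 = y.
Proof. intros Hxy. rewrite <- (mulg1 (x^-1)), <- Hxy. apply mulVKg. Qed.

Lemma invgK x : x^-1^-1 = x.
Proof. apply inv_eq_of_mul_eq1, mulVg. Qed.

Lemma invMg x y : (x * y)^-1 = y^-1 * x^-1.
Proof.
  apply inv_eq_of_mul_eq1.
  rewrite <- mulgA, mulKg. apply mulgV.
Qed.

Lemma invg1 : e^-1 = e.
Proof. apply inv_eq_of_mul_eq1, mul1g. Qed.

Local Ltac group_normalize :=
  repeat rewrite invMg; repeat rewrite invgK; repeat rewrite invg1;
  repeat rewrite <- mulgA;
  repeat first [ rewrite mulKg | rewrite mulVKg | rewrite mulgV
               | rewrite mulVg | rewrite mulg1 | rewrite mul1g ].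

Lemma corollary1_coordinates r1 f g :
  let a21 := gconj mul inv (f^-1) (r1^-1) in
  let a22 := r1 * a21 in
  let a12 := gconj mul inv g (a22^-1) in
  e * a22 * e^-1 * a21^-1 = r1
  /\ a12 * a21 * a12^-1 * a22^-1 = r1^-1 * gcomm mul inv f g.
Proof. unfold gconj, gcomm; simpl. split; group_normalize; reflexivity. Qed.

End GroupWords.

Lemma wr_comm_swap_diag (B : Type) (mul : B -> B -> B) (inv : B -> B) u a b c :
  wr_comm mul inv (Wr u a true) (Wr b c false)
  = Wr (mul (mul (mul u c) (inv u)) (inv b))
       (mul (mul (mul a b) (inv a)) (inv c)) false.
Proof. reflexivity. Qed.

Theorem corollary1 (B : Type) (mul : B -> B -> B) (inv : B -> B) (e : B)
  (HB : is_group mul inv e) (r1 f g : B) :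
  let a21 := gconj mul inv (inv f) (inv r1) in
  let a22 := mul r1 a21 in
  let a12 := gconj mul inv g (inv a22) in
  Wr r1 (mul (inv r1) (gcomm mul inv f g)) false
  = wr_comm mul inv (Wr e a12 true) (Wr a21 a22 false).
Proof.
  intros a21 a22 a12; subst a21 a22 a12.
  rewrite wr_comm_swap_diag.
  destruct (corollary1_coordinates HB r1 f g) as [-> ->].
  reflexivity.
Qed.
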